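(* For the RHA process, all $n\ge1$ and $j\ge1$, $$H(X^n_j)\ge\max_{l}\Big(\log\binom{k_{l-1}^2}{k_l}-\log\binom{k_{l-1}^2-2^{n-l}}{k_l-2^{n-l}}\Big)P(A_{nl}),$$ where the maximum ranges over $l\in\{1,\dots,n\}$ with $k_l\ge2^{n-l}$, and $A_{nl}$ is the event that the $2^{n-l}$ consecutive length-$2^l$ blocks $X^l_{2^{n-l}},\dots,X^l_{2^{n-l+1}-1}$ composing $X^n_1$ are pairwise distinct.
   Context: Random hierarchical association (RHA) process. Fix positive integers $(k_n)_{n\ge0}$ (perplexities) with $k_{n-1}\le k_n\le k_{n-1}^2$ for all $n\ge1$. On a probability space $(\Omega,\mathcal J,P)$ let, for each $n\ge1$, $(L_{nj},R_{nj})_{j=1}^{k_n}$ be the lexicographically sorted enumeration of a uniformly random $k_n$-element subset of $\{1,\dots,k_{n-1}\}^2$ (each of the $\binom{k_{n-1}^2}{k_n}$ subsets equally likely), independently over $n$. Let $(C_n)_{n\ge0}$ be independent, independent of all $(L_{nj},R_{nj})$, with $C_n$ uniform on $\{1,\dots,k_n\}$. Define strings $Y^0_j=j$ (length 1) for $1\le j\le k_0$ and $Y^n_j=Y^{n-1}_{L_{nj}}Y^{n-1}_{R_{nj}}$ (concatenation). The RHA process is $\mathcal X=Y^0_{C_0}Y^1_{C_1}Y^2_{C_2}\cdots=X_1X_2X_3\cdots$, $X_{k:l}=X_k\cdots X_l$; for $n\ge0$, $j\ge1$, $X^n_j=X_{j2^n:(j+1)2^n-1}$ (so $X^n_1=Y^n_{C_n}$).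 $H(X)=\mathbb E_P[-\log P(X)]$ with natural logarithm. *)

From Stdlib Require Import Reals.
From HB Require Import structures.
From mathcomp Require Import all_boot.


(* Finite model of the RHA process truncated after level M (levels 0..M).
   Values are 0-based: symbols 0..k_0-1, indices 0..k_l-1 (a bijective
   relabelling of the paper's 1-based conventions). *)

Definition Bnd (k : nat -> nat) (M : nat) : nat := \max_(l < M.+1) k l.

(* sample point: for each level l <= M a set S_l of pairs (the random
   k_l-subset of {0..k_{l-1}-1}^2; S_0 unused and forced empty) and C_l. *)
Notation Omega k M :=
  ({ffun 'I_M.+1 -> {set 'I_(Bnd k M) * 'I_(Bnd k M)}}
   * {ffun 'I_M.+1 -> 'I_(Bnd k M)})%type.

(* Validity: omega is in the support of the (uniform, independent) law. *)
Definition Valid (k : nat -> nat) (M : nat) (w : Omega k M) : bool :=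
  [forall i : 'I_M.+1,
     (val (w.2 i) < k i) &&
     (if val i is i'.+1 then
        (#|w.1 i| == k i) &&
        [forall p in w.1 i, (val p.1 < k i') && (val p.2 < k i')]
      else w.1 i == set0)].

Definition lexle (p q : nat * nat) : bool :=
  (p.1 < q.1) || ((p.1 == q.1) && (p.2 <= q.2)).

(* lexicographically sorted enumeration (L_{l,j}, R_{l,j})_j of S_l *)
Definition Sof (k : nat -> nat) (M : nat) (w : Omega k M) (l : nat)
  : seq (nat * nat) :=
  if l <= M then
    sort lexle [seq (val p.1, val p.2) | p <- enum (w.1 (@inord M l))]
  else [::].

Definition Cof (k : nat -> nat) (M : nat) (w : Omega k M) (l : nat) : nat :=
  if l <= M then val (w.2 (@inord M l)) else 0.

Fixpoint Yf (S : nat -> seq (nat * nat)) (l j : nat) : seq nat :=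
  match l with
  | 0 => [:: j]
  | l'.+1 => let p := nth (0, 0) (S l'.+1) j in Yf S l' p.1 ++ Yf S l' p.2
  end.

(* X_1 X_2 ... X_{2^(M+1)-1} = Y^0_{C_0} Y^1_{C_1} ... Y^M_{C_M} *)
Definition Xfin (k : nat -> nat) (M : nat) (w : Omega k M) : seq nat :=
  flatten [seq Yf (Sof k M w) l (Cof k M w l) | l <- iota 0 M.+1].

(* X^n_j = X_{j 2^n : (j+1) 2^n - 1}  (X is 1-indexed) *)
Definition Xblock (k : nat -> nat) (M : nat) (w : Omega k M) (n j : nat)
  : seq nat :=
  take (2 ^ n) (drop (j * 2 ^ n - 1) (Xfin k M w)).

Definition prob (k : nat -> nat) (M : nat) (E : pred (Omega k M)) : R :=
  Rdiv (INR #|[pred w | Valid k M w && E w]|) (INR #|[pred w | Valid k M w]|).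

Definition entropy (k : nat -> nat) (M : nat) (f : Omega k M -> seq nat) : R :=
  \big[Rplus/R0]_(s <- undup [seq f w | w <- enum [pred w : Omega k M | Valid k M w]])
    Ropp (Rmult (prob k M (fun w => f w == s)) (ln (prob k M (fun w => f w == s)))).

Definition Aevent (k : nat -> nat) (M : nat) (n l : nat) (w : Omega k M) : bool :=
  uniq [seq Xblock k M w l i | i <- iota (2 ^ (n - l)) (2 ^ (n - l))].

Definition binterm (k : nat -> nat) (n l : nat) : R :=
  Rminus (ln (INR 'C(k l.-1 ^ 2, k l)))
         (ln (INR 'C(k l.-1 ^ 2 - 2 ^ (n - l), k l - 2 ^ (n - l)))).

(* maximum of a nonempty list of reals (0 on the empty list, never used) *)
Definition maxR (s : seq R) : R :=
  match s with [::] => R0 | x :: s' => foldr Rmax x s' end.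

From Stdlib Require Import Reals Lra.
From HB Require Import structures.
From mathcomp Require Import all_boot zify.
Unset Printing Implicit Defensive.

(* Writing j = 2^a + q, the block X^n_j is the word Y^n at the index reached from C_{n+a} by
   descending a levels, each time taking one coordinate of the chosen pair of a uniformly random
   subset.  Such a coordinate is uniform and independent of the lower levels, just like the
   choice C at the level below, so X^n_j has the law of X^n_1 = Y^n_{C_n}; in particular
   P(A_nl) is the probability that the 2^(n-l) level-l blocks of X^n_j are distinct.  On that
   event the value s of X^n_j determines, through the injective level-(l-1) words, 2^(n-l)
   distinct pairs that must all lie in the random k_l-subset of level l, which has probability
   C(k_{l-1}^2 - 2^(n-l), k_l - 2^(n-l)) / C(k_{l-1}^2, k_l).  So -log P(X^n_j = s) is at least
   the binomial term on A_nl, which bounds the entropy. *)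

(** * Counting *)

Lemma card_predE (T : finType) (P : pred T) : #|[pred x | P x]| = \sum_x P x.
Proof. by rewrite -sum1_card big_mkcond; apply: eq_bigr => x _; rewrite unfold_in; case: (P x). Qed.

Lemma sum_pair (A Z : finType) (F : A * Z -> nat) : \sum_p F p = \sum_a \sum_z F (a, z).
Proof. by rewrite pair_bigA; apply: eq_bigr => -[]. Qed.

Lemma sum_nat_count (T : Type) (r : seq T) (P : pred T) : \sum_(x <- r) P x = count P r.
Proof. by elim: r => [|a r IH]; rewrite ?big_nil ?big_cons ?IH. Qed.

Lemma card_ord_lt_count {B K} (P : pred nat) : K <= B ->
  #|[pred d : 'I_B | (d < K) && P d]| = count P (iota 0 K).
Proof.
move=> hKB; rewrite card_predE -(big_mkord xpredT (fun d => (d < K) && P d : nat)).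
rewrite (big_cat_nat (leq0n K) hKB) /=.
rewrite (@big1_seq _ _ _ _ (index_iota K B)) ?addn0; last first.
  by move=> d /andP [_]; rewrite mem_index_iota => /andP [hd _]; rewrite ltnNge hd.
rewrite -sum_nat_count /index_iota subn0 big_seq_cond [RHS]big_seq_cond.
by apply: eq_bigr => d /andP []; rewrite mem_iota => /andP [_ ->].
Qed.

Lemma card_ord_lt {B K} : K <= B -> #|[pred d : 'I_B | d < K]| = K.
Proof.
move=> hKB; rewrite -[RHS](size_iota 0) -count_predT -(card_ord_lt_count predT hKB).
by apply: eq_card => d; rewrite !inE andbT.
Qed.

Lemma card_draws_supset {X : finType} (D P : {set X}) K : P \subset D -> #|P| <= K ->
  #|[set T : {set X} | (T \subset D) && (#|T| == K) && (P \subset T)]| =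
  'C(#|D| - #|P|, K - #|P|).
Proof.
move=> sPD leK; rewrite -[#|D|](cardsID P) (setIidPr sPD) addKn -cards_draws.
rewrite -(@card_in_imset _ _ (fun T => T :\: P)); last first.
  move=> T1 T2; rewrite !inE => /andP [/andP [_ _] s1] /andP [/andP [_ _] s2] e.
  by rewrite -(setID T1 P) -(setID T2 P) (setIidPr s1) (setIidPr s2) e.
apply: eq_card => U; rewrite inE; apply/imsetP/andP => [[T]|[sUD /eqP cU]].
  rewrite inE => /andP [/andP [sTD /eqP cT] sPT] ->; split; first exact: setSD.
  by rewrite cardsD (setIidPr sPT) cT.
exists (U :|: P); last first.
  apply/setP => x; rewrite !inE; case: (boolP (x \in P)) => [xP | _]; last by rewrite orbF.
  by apply/negbTE/negP => /(subsetP sUD); rewrite inE xP.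
have UP0 : U :&: P = set0.
  apply/setP => y; rewrite !inE; apply/negbTE/andP => -[/(subsetP sUD)].
  by rewrite inE => /andP [/negP yP _].
rewrite inE subUset sPD (subset_trans sUD (subsetDl _ _)) subsetUr.
by rewrite cardsU UP0 cards0 subn0 cU subnK // eqxx.
Qed.

Lemma card_draws_supset_le {X : finType} (D P : {set X}) K : #|P| <= K ->
  #|[set T : {set X} | (T \subset D) && (#|T| == K) && (P \subset T)]| <=
  'C(#|D| - #|P|, K - #|P|).
Proof.
move=> leK; have [sPD | nsPD] := boolP (P \subset D); first by rewrite card_draws_supset.
suff -> : [set T : {set X} | (T \subset D) && (#|T| == K) && (P \subset T)] = set0.
  by rewrite cards0.
apply/setP => T; rewrite !inE; apply/negbTE; apply: contra nsPD => /andP [/andP [sTD _] sPT].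
exact: subset_trans sPT sTD.
Qed.

Lemma card_preim_seq (X : finType) (Y : eqType) (f : X -> Y) (r : seq Y) :
  injective f -> uniq r -> {subset r <= codom f} -> #|[set x | f x \in r]| = size r.
Proof.
move=> finj ru rf; rewrite cardE -(size_map f); apply/perm_size/uniq_perm => //.
  by rewrite (map_inj_uniq finj) enum_uniq.
move=> y; apply/mapP/idP => [[x] | yr]; first by rewrite mem_enum inE => ? ->.
by have /codomP [x ey] := rf y yr; exists x; rewrite // mem_enum inE -ey.
Qed.

Section Resample.
Variables (A Z : finType) (valid : pred A) (ok : pred Z).
Variables (upd : A -> Z -> A) (get : A -> Z).
Hypotheses (get_upd : forall a z, get (upd a z) = z) (updK : forall a z, upd (upd a z) (get a) = a).
Hypothesis valid_upd : forall a z, valid (upd a z) && ok (get a) = valid a && ok z.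

(* (a, z) |-> (upd a z, get a) is an involution of A * Z preserving [valid a && ok z]. *)
Lemma sum_resample (G : A -> nat) :
  (\sum_(a | valid a) G a) * #|ok| = \sum_(a | valid a) \sum_(z | ok z) G (upd a z).
Proof.
pose swap p := (upd p.1 p.2, get p.1).
have swapK : involutive swap by case=> a z; rewrite /swap /= get_upd updK.
rewrite -cardsE big_distrl /= (eq_bigr (fun a => \sum_(z | ok z) G a)); last first.
  by move=> a _; rewrite cardsE -sum1_card big_distrr /= muln1.
rewrite !pair_big_dep (reindex_inj (inv_inj swapK)) /=.
by apply: eq_bigl => -[a z]; rewrite /swap /= valid_upd.
Qed.
End Resample.
Arguments sum_resample {A Z valid ok upd get}.

Lemma card_fibers_uniform (Z : finType) (P : pred Z) (E : Z -> nat) K c (h : pred nat) :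
  (forall z, P z -> E z < K) -> (forall x, x < K -> #|[pred z | P z && (E z == x)]| = c) ->
  #|[pred z | P z && h (E z)]| = c * count h (iota 0 K).
Proof.
move=> EK fiber; rewrite -sum_nat_count big_distrr /= big_seq.
rewrite (eq_bigr (fun x => #|[pred z | P z && (E z == x) && h x]|)) -?big_seq; last first.
  move=> x; rewrite mem_iota => /andP [_ /fiber <-]; case: (h x); rewrite ?muln1 ?muln0.
    by apply: eq_card => z; rewrite !inE andbT.
  by apply/esym/eqP; rewrite eqn0Ngt; apply/card_gt0P => -[z]; rewrite !inE andbF.
rewrite card_predE (eq_bigr (fun z => \sum_(x <- iota 0 K) (P z && (E z == x) && h x : nat))).
  by rewrite exchange_big /=; apply: eq_bigr => x _; rewrite card_predE.
move=> z _; have [Pz | nPz] := boolP (P z); last by rewrite big1.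
rewrite /= (bigD1_seq (E z)) ?iota_uniq ?mem_iota ?EK //= eqxx big1 ?addn0 // => x.
by rewrite eq_sym => /negbTE ->.
Qed.

(** * Dyadic blocks of the process *)

Definition block (l : nat) (s : seq nat) (t : nat) : seq nat := take (2 ^ l) (drop (t * 2 ^ l) s).

Definition distinct_blocks (l m : nat) (s : seq nat) : bool :=
  uniq [seq block l s t | t <- iota 0 m].

Fixpoint descend (S : nat -> seq (nat * nat)) (b a i q : nat) : nat :=
  if a is a'.+1 then
    let p := nth (0, 0) (S (b + a').+1) i in
    if q < 2 ^ a' then descend S b a' p.1 q else descend S b a' p.2 (q - 2 ^ a')
  else i.

Lemma Yf_ext S S' n x : (forall l, l <= n -> S l = S' l) -> Yf S n x = Yf S' n x.
Proof.
elim: n x => [|n IH] x same //=.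
by rewrite same // !IH // => l ln; apply: same; rewrite ltnW.
Qed.

Lemma descend_ext S S' b a i q : (forall l, l <= b + a -> S l = S' l) ->
  descend S b a i q = descend S' b a i q.
Proof.
elim: a i q => [|a IH] i q same //=; rewrite same ?addnS //.
by case: ifP => _; apply: IH => l la; apply: same; rewrite addnS ltnW.
Qed.

Lemma size_Yf S l j : size (Yf S l j) = 2 ^ l.
Proof. by elim: l j => [|l IH] j //=; rewrite size_cat !IH expnS mul2n addnn. Qed.

Lemma block_Yf S b a i q : q < 2 ^ a ->
  block b (Yf S (b + a) i) q = Yf S b (descend S b a i q).
Proof.
rewrite /block; elim: a i q => [|a IH] i q qa /=.
  have -> : q = 0 by move: qa; rewrite expn0; lia.
  by rewrite addn0 mul0n drop0 take_oversize // size_Yf.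
have e : 2 ^ (b + a) = 2 ^ b * 2 ^ a by rewrite expnD.
have b0 : 0 < 2 ^ b by rewrite expn_gt0.
rewrite addnS /= drop_cat !size_Yf; have [qa' | aq] := ltnP q (2 ^ a).
  rewrite ifT ?e; last by nia.
  by rewrite takel_cat ?IH // size_drop size_Yf e; nia.
rewrite ifF ?e; last by apply/negbTE; rewrite -leqNgt; nia.
rewrite -e (_ : q * 2 ^ b - 2 ^ (b + a) = (q - 2 ^ a) * 2 ^ b) ?IH //.
  by move: qa; rewrite expnS; lia.
by rewrite e mulnBl (mulnC (2 ^ b)).
Qed.

Lemma size_flatten_dyadic (F : nat -> seq nat) m : (forall l, size (F l) = 2 ^ l) ->
  size (flatten [seq F l | l <- iota 0 m]) = 2 ^ m - 1.
Proof.
move=> sF; elim: m => [|m IH] //.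
rewrite -addn1 iotaD map_cat flatten_cat size_cat IH /= cats0 sF add0n expnD expn1.
have : 0 < 2 ^ m by rewrite expn_gt0.
lia.
Qed.

Lemma drop_flatten_dyadic (F : nat -> seq nat) m K : (forall l, size (F l) = 2 ^ l) -> m < K ->
  drop (2 ^ m - 1) (flatten [seq F l | l <- iota 0 K]) =
  F m ++ flatten [seq F l | l <- iota m.+1 (K - m.+1)].
Proof.
move=> sF mK; rewrite (_ : K = m + (K - m.+1).+1); last by lia.
rewrite iotaD map_cat flatten_cat drop_size_cat ?size_flatten_dyadic //=.
by congr (_ ++ flatten (map _ (iota _ _))); lia.
Qed.

Lemma Xblock_descend k M w n a q : n + a <= M -> q < 2 ^ a ->
  Xblock k M w n (2 ^ a + q) =
  Yf (Sof k M w) n (descend (Sof k M w) n a (Cof k M w (n + a)) q).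
Proof.
move=> naM qa; rewrite -block_Yf // /Xblock /Xfin /block.
have e : 2 ^ (n + a) = 2 ^ n * 2 ^ a by rewrite expnD.
have n0 : 0 < 2 ^ n by rewrite expn_gt0.
rewrite (_ : (2 ^ a + q) * 2 ^ n - 1 = q * 2 ^ n + (2 ^ (n + a) - 1)); last by rewrite e; nia.
rewrite -drop_drop drop_flatten_dyadic => [|l|]; last (by lia); last by rewrite size_Yf.
rewrite drop_cat size_Yf ifT; last by rewrite e; nia.
by rewrite takel_cat // size_drop size_Yf e; nia.
Qed.

Lemma Aevent_distinct_blocks k M n l w : l <= n ->
  Aevent k M n l w = distinct_blocks l (2 ^ (n - l)) (Xblock k M w n 1).
Proof.
move=> ln; rewrite /Aevent /distinct_blocks /block.
have e : 2 ^ (n - l) * 2 ^ l = 2 ^ n by rewrite -expnD subnK.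
have l0 : 0 < 2 ^ l by rewrite expn_gt0.
rewrite -{1}(addn0 (2 ^ (n - l))) iotaDl -map_comp; congr uniq.
apply/eq_in_map => t; rewrite mem_iota add0n => /andP [_ tm] /=.
rewrite /Xblock !take_drop take_takel; last by rewrite -e; nia.
by rewrite drop_drop mul1n; congr (drop _ (take _ _)); rewrite -e; nia.
Qed.

Lemma dyadic_decomp {M n j} : 0 < j -> j.+1 * 2 ^ n <= 2 ^ M.+1 ->
  exists a q, [/\ n + a <= M, q < 2 ^ a & j = 2 ^ a + q].
Proof.
move=> j0 jM; have /andP [lo hi] := trunc_log_bounds (isT : 1 < 2) j0.
exists (trunc_log 2 j), (j - 2 ^ trunc_log 2 j); split; last 2 first.
- by move: hi; rewrite expnS; lia.
- by lia.
rewrite -ltnS -(ltn_exp2l _ _ (isT : 1 < 2)); apply: leq_trans jM.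
have : 0 < 2 ^ n by rewrite expn_gt0.
rewrite expnD; nia.
Qed.

(** * The sample space level by level *)

Definition Yf_index (k : nat -> nat) (S : nat -> seq (nat * nat)) (l : nat) (h : seq nat) : nat :=
  index h (mkseq (Yf S l) (k l)).

Section SampleSpace.
Variables (k : nat -> nat) (M : nat).
Local Notation B := (Bnd k M).
Local Notation Om := (Omega k M).
Local Notation level := ({set 'I_B * 'I_B} * 'I_B)%type.

Definition pair_box (l : nat) : {set 'I_B * 'I_B} :=
  [set p : 'I_B * 'I_B | (p.1 < k l) && (p.2 < k l)].

Definition level_set_ok (l : nat) (T : {set 'I_B * 'I_B}) : bool :=
  if l is l'.+1 then (T \subset pair_box l') && (#|T| == k l) else T == set0.

Definition level_ok (l : nat) (z : level) : bool := (z.2 < k l) && level_set_ok l z.1.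

Definition get_level (i : 'I_M.+1) (w : Om) : level := (w.1 i, w.2 i).

Definition set_level (i : 'I_M.+1) (w : Om) (z : level) : Om :=
  ([ffun j => if j == i then z.1 else w.1 j], [ffun j => if j == i then z.2 else w.2 j]).

Definition set_choice (i : 'I_M.+1) (w : Om) (d : 'I_B) : Om :=
  (w.1, [ffun j => if j == i then d else w.2 j]).

Lemma Valid_levelwise w : Valid k M w = [forall i : 'I_M.+1, level_ok i (get_level i w)].
Proof.
apply: eq_forallb => -[[|l] li]; rewrite /level_ok /level_set_ok //= [(_ \subset _) && _]andbC.
congr (_ && (_ && _)); apply/forall_inP/subsetP => sub p /sub; rewrite inE //.
Qed.

Lemma valid_level w (i : 'I_M.+1) : Valid k M w -> level_ok i (get_level i w).
Proof. by rewrite Valid_levelwise => /forallP. Qed.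

Lemma Valid_update (i : 'I_M.+1) w w' :
  (forall j, j != i -> get_level j w' = get_level j w) ->
  Valid k M w -> level_ok i (get_level i w') -> Valid k M w'.
Proof.
move=> same vw ok_i; rewrite Valid_levelwise; apply/forallP => j.
by have [-> // | ji] := eqVneq j i; rewrite same //; apply: valid_level.
Qed.

Lemma get_set_level i w z : get_level i (set_level i w z) = z.
Proof. by rewrite /get_level !ffunE eqxx; case: z. Qed.

Lemma set_levelK i w z : set_level i (set_level i w z) (get_level i w) = w.
Proof. by case: w => w1 w2; congr (_, _); apply/ffunP => j; rewrite !ffunE; case: eqP => // ->. Qed.

Lemma valid_set_level (i : 'I_M.+1) w z :
  Valid k M (set_level i w z) && level_ok i (get_level i w) = Valid k M w && level_ok i z.
Proof.
suff imp w' z' : Valid k M w' && level_ok i z' ->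
    Valid k M (set_level i w' z') && level_ok i (get_level i w').
  by apply/idP/idP => /imp //; rewrite set_levelK get_set_level.
case/andP => vw oz; rewrite valid_level // andbT.
apply: (Valid_update i w') => // [j ji|]; last by rewrite get_set_level.
by rewrite /get_level !ffunE (negbTE ji).
Qed.

Lemma get_set_choice i w d : (set_choice i w d).2 i = d.
Proof. by rewrite ffunE eqxx. Qed.

Lemma set_choiceK i w d : set_choice i (set_choice i w d) (w.2 i) = w.
Proof. by case: w => w1 w2; congr (_, _); apply/ffunP => j; rewrite !ffunE; case: eqP => // ->. Qed.

Lemma valid_set_choice (i : 'I_M.+1) w d :
  Valid k M (set_choice i w d) && (w.2 i < k i) = Valid k M w && (d < k i).
Proof.
suff imp w' (d' : 'I_B) :
    Valid k M w' && (d' < k i) -> Valid k M (set_choice i w' d') && (w'.2 i < k i).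
  by apply/idP/idP => /imp //; rewrite set_choiceK get_set_choice.
case/andP => vw di; have /andP [-> ok_i] := valid_level w' i vw; rewrite andbT.
apply: (Valid_update i w') => // [j ji|]; first by rewrite /get_level !ffunE (negbTE ji).
by rewrite /level_ok /get_level /= ffunE eqxx di.
Qed.

Definition pair_val (p : 'I_B * 'I_B) : nat * nat := (val p.1, val p.2).

Definition sorted_pairs (T : {set 'I_B * 'I_B}) : seq (nat * nat) :=
  sort lexle [seq pair_val p | p <- enum T].

Lemma pair_val_inj : injective pair_val.
Proof. by move=> [a b] [c d] [/val_inj -> /val_inj ->]. Qed.

Lemma sorted_pairs_uniq T : uniq (sorted_pairs T).
Proof. by rewrite sort_uniq (map_inj_uniq pair_val_inj) enum_uniq. Qed.

Lemma size_sorted_pairs T : size (sorted_pairs T) = #|T|.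
Proof. by rewrite size_sort size_map cardE. Qed.

Lemma mem_sorted_pairs T p : (p \in sorted_pairs T) = [exists q in T, pair_val q == p].
Proof.
rewrite mem_sort; apply/mapP/exists_inP => [[q] | [q qT /eqP <-]].
  by rewrite mem_enum => qT ->; exists q.
by exists q; rewrite ?mem_enum.
Qed.

Lemma mem_sorted_pairs_val T q : (pair_val q \in sorted_pairs T) = (q \in T).
Proof.
rewrite mem_sorted_pairs; apply/exists_inP/idP => [[q' q'T /eqP /pair_val_inj <-] // | qT].
by exists q.
Qed.

Lemma Sof_E w l : l <= M -> Sof k M w l = sorted_pairs (w.1 (inord l)).
Proof. by rewrite /Sof => ->. Qed.

Lemma Cof_E w l : l <= M -> Cof k M w l = w.2 (inord l).
Proof. by rewrite /Cof => ->. Qed.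

Lemma inord_eq (i : 'I_M.+1) l : l <= M -> (inord l == i) = (l == i).
Proof. by move=> lM; rewrite -(inj_eq val_inj) /= inordK. Qed.

Lemma Sof_set_level i w z l :
  Sof k M (set_level i w z) l = if l == i then sorted_pairs z.1 else Sof k M w l.
Proof.
rewrite /Sof; case: leqP => [lM | Ml]; first by rewrite ffunE inord_eq //; case: eqP.
by case: eqP => // li; move: Ml; rewrite li ltnNge -ltnS ltn_ord.
Qed.

Lemma Sof_set_choice i w d : Sof k M (set_choice i w d) =1 Sof k M w.
Proof. by []. Qed.

Lemma Cof_set_choice i w d l :
  Cof k M (set_choice i w d) l = if l == i then val d else Cof k M w l.
Proof.
rewrite /Cof; case: leqP => [lM | Ml]; first by rewrite ffunE inord_eq //; case: eqP.
by case: eqP => // li; move: Ml; rewrite li ltnNge -ltnS ltn_ord.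
Qed.

Section ValidPoint.
Variables (w : Om) (vw : Valid k M w).

Lemma Cof_lt l : l <= M -> Cof k M w l < k l.
Proof.
move=> lM; rewrite Cof_E //; have /andP [] := valid_level w (inord l) vw.
by rewrite inordK.
Qed.

Lemma Sof_valid l : 0 < l -> l <= M ->
  [/\ uniq (Sof k M w l), size (Sof k M w l) = k l &
      forall p, p \in Sof k M w l -> (p.1 < k l.-1) && (p.2 < k l.-1)].
Proof.
case: l => // l _ lM; rewrite Sof_E //; have /andP [_] := valid_level w (inord l.+1) vw.
rewrite /level_set_ok /get_level inordK // => /andP [sub /eqP card_k].
split=> [||p]; rewrite ?sorted_pairs_uniq ?size_sorted_pairs //.
by rewrite mem_sorted_pairs => /exists_inP [q /(subsetP sub)]; rewrite inE => ? /eqP <-.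
Qed.

Lemma nth_Sof_lt l i : 0 < l -> l <= M -> i < k l ->
  let p := nth (0, 0) (Sof k M w l) i in (p.1 < k l.-1) && (p.2 < k l.-1).
Proof.
move=> l0 lM il; have [_ sz sub] := Sof_valid _ l0 lM.
by apply/sub/mem_nth; rewrite sz.
Qed.

Lemma descend_lt n a i q : n + a <= M -> i < k (n + a) -> descend (Sof k M w) n a i q < k n.
Proof.
elim: a i q => [|a IH] i q; first by rewrite addn0 => _.
rewrite addnS => naM ina /=; have /andP [p1 p2] := nth_Sof_lt (n + a).+1 i (ltn0Sn _) naM ina.
by case: ifP => _; apply: IH; rewrite // ltnW.
Qed.

Lemma Yf_inj l i i' : l <= M -> i < k l -> i' < k l ->
  Yf (Sof k M w) l i = Yf (Sof k M w) l i' -> i = i'.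
Proof.
elim: l i i' => [|l IH] i i' lM il i'l /=; first by case.
move/eqP; rewrite eqseq_cat ?size_Yf // => /andP [/eqP e1 /eqP e2].
have [Su sz _] := Sof_valid l.+1 (ltn0Sn _) lM.
have /andP [a1 a2] := nth_Sof_lt l.+1 i (ltn0Sn _) lM il.
have /andP [b1 b2] := nth_Sof_lt l.+1 i' (ltn0Sn _) lM i'l.
apply/eqP; rewrite -(nth_uniq (0, 0) _ _ Su) ?sz //; apply/eqP.
move: (IH _ _ (ltnW lM) a1 b1 e1) (IH _ _ (ltnW lM) a2 b2 e2).
by case: (nth _ _ i) => ? ?; case: (nth _ _ i') => ? ? /= -> ->.
Qed.

Lemma Yf_indexK l i : l <= M -> i < k l -> Yf_index k (Sof k M w) l (Yf (Sof k M w) l i) = i.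
Proof.
move=> lM il; set Y := Yf (Sof k M w) l.
have Ymem : Y i \in mkseq Y (k l) by apply/mapP; exists i; rewrite ?mem_iota.
have idx_lt : Yf_index k (Sof k M w) l (Y i) < k l by rewrite -(size_mkseq Y (k l)) index_mem.
apply: (Yf_inj l _ _ lM idx_lt il); have := nth_index [::] Ymem.
by rewrite nth_mkseq.
Qed.

End ValidPoint.
End SampleSpace.

Definition pair_coord (right : bool) (p : nat * nat) : nat := if right then p.2 else p.1.

Section LevelCounts.
Variables (k : nat -> nat) (M : nat).
Local Notation B := (Bnd k M).
Local Notation level := ({set 'I_B * 'I_B} * 'I_B)%type.

Definition picked_coord (right : bool) (z : level) : nat :=
  pair_coord right (nth (0, 0) (sorted_pairs k M z.1) z.2).

Lemma Bnd_ge {l} : l <= M -> k l <= B.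
Proof. by move=> lM; have := @leq_bigmax _ (fun i : 'I_M.+1 => k i) (inord l); rewrite inordK. Qed.

Lemma card_pair_box l : l <= M -> #|pair_box k M l| = k l * k l.
Proof.
move=> lM; have -> : pair_box k M l = setX [set x : 'I_B | x < k l] [set x : 'I_B | x < k l].
  by apply/setP => p; rewrite !inE.
by rewrite cardsX cardsE card_ord_lt // Bnd_ge.
Qed.

Lemma card_pair_box_coord right {l x} : l <= M -> x < k l ->
  #|[set q | (q \in pair_box k M l) && (pair_coord right (pair_val k M q) == x)]| = k l.
Proof.
move=> lM xl; have xB : x < B := leq_trans xl (Bnd_ge lM).
pose line (y : 'I_B) := if right then (y, Ordinal xB) else (Ordinal xB, y).
have -> : [set q | (q \in pair_box k M l) && (pair_coord right (pair_val k M q) == x)] =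
    line @: [set y : 'I_B | y < k l].
  apply/setP => -[a b]; rewrite /line !inE /pair_coord /=; clear line.
  apply/idP/imsetP; case: right.
  - by case/andP => /andP [al bl] /eqP e; exists a; rewrite ?inE //; congr (_, _); apply: val_inj.
  - by case/andP => /andP [al bl] /eqP e; exists b; rewrite ?inE //; congr (_, _); apply: val_inj.
  - by case=> y; rewrite inE => yl [-> ->] /=; rewrite xl yl eqxx.
  - by case=> y; rewrite inE => yl [-> ->] /=; rewrite xl yl eqxx.
rewrite card_imset ?cardsE ?card_ord_lt ?Bnd_ge //.
by move=> y1 y2; rewrite /line; clear line; case: right => -[].
Qed.

Lemma card_level_ok_set m (Q : pred {set 'I_B * 'I_B}) : m <= M ->
  #|[pred z : level | level_ok k M m z && Q z.1]| =
  #|[pred T | level_set_ok k M m T && Q T]| * k m.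
Proof.
move=> mM; rewrite card_predE sum_pair card_predE big_distrl /=; apply: eq_bigr => T _.
rewrite -[k m](card_ord_lt (Bnd_ge mM)) card_predE big_distrr /=; apply: eq_bigr => d _.
by rewrite /level_ok /=; case: (d < k m); case: (level_set_ok _ _ _ _); case: (Q T).
Qed.

Lemma card_level_set_ok m : 0 < m -> m <= M ->
  #|[pred T | level_set_ok k M m T]| = 'C(k m.-1 * k m.-1, k m).
Proof.
case: m => // m _ mM; rewrite -card_pair_box ?(ltnW mM) //.
have := card_draws_supset (pair_box k M m) set0 (k m.+1) (sub0set _) ltac:(by rewrite cards0).
rewrite cards0 !subn0 => <-; apply: eq_card => T.
by rewrite !inE sub0set andbT.
Qed.

Lemma card_level_ok m : 0 < m -> m <= M ->
  #|[pred z : level | level_ok k M m z]| = 'C(k m.-1 * k m.-1, k m) * k m.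
Proof.
move=> m0 mM; transitivity #|[pred z : level | level_ok k M m z && predT z.1]|.
  by apply: eq_card => z; rewrite !inE andbT.
rewrite card_level_ok_set // -card_level_set_ok //; congr (_ * _).
by apply: eq_card => T; rewrite !inE andbT.
Qed.

Lemma card_level_set_ok_mem m q : 0 < m -> m <= M -> 0 < k m ->
  #|[pred T | level_set_ok k M m T && (q \in T)]| =
  (q \in pair_box k M m.-1) * 'C(k m.-1 * k m.-1 - 1, k m - 1).
Proof.
case: m => // m _ mM km; rewrite /=; have [qbox | nqbox] := boolP (q \in pair_box k M m).
  rewrite mul1n -card_pair_box ?(ltnW mM) // -(cards1 q) -card_draws_supset ?sub1set ?cards1 //.
  by apply: eq_card => T; rewrite !inE sub1set.
apply/eqP; rewrite card_predE sum_nat_eq0; apply/forallP => T; apply/implyP => _.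
by rewrite eqb0; apply: contra nqbox => /andP [/andP [/subsetP sub _] /sub].
Qed.

Lemma count_sorted_pairs (P : pred (nat * nat)) T :
  count P (sorted_pairs k M T) = \sum_(q in T) P (pair_val k M q).
Proof.
rewrite /sorted_pairs count_sort count_map -sum1_count big_enum_cond big_mkcondr /=.
by apply: eq_bigr => q _; rewrite /preim /=; case: (P _).
Qed.

Lemma picked_coord_lt m right z :
  0 < m -> m <= M -> level_ok k M m z -> picked_coord right z < k m.-1.
Proof.
case: m => // m _ mM; case: z => T d /andP [/= dm /andP [sub /eqP cT]].
have : nth (0, 0) (sorted_pairs k M T) d \in sorted_pairs k M T.
  by rewrite mem_nth ?size_sorted_pairs ?cT.
rewrite mem_sorted_pairs => /exists_inP [q /(subsetP sub)]; rewrite inE => /andP [q1 q2] /eqP e.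
by rewrite /picked_coord /pair_coord /= -e; case: right.
Qed.

Lemma card_level_ok_picked m right x : 0 < m -> m <= M -> 0 < k m -> x < k m.-1 ->
  #|[pred z : level | level_ok k M m z && (picked_coord right z == x)]| =
  'C(k m.-1 * k m.-1 - 1, k m - 1) * k m.-1.
Proof.
move=> m0 mM km xm; have m'M : m.-1 <= M by rewrite (leq_trans (leq_pred m)).
pose hit p := pair_coord right p == x.
transitivity (\sum_T level_set_ok k M m T * count hit (sorted_pairs k M T)).
  rewrite card_predE sum_pair; apply: eq_bigr => T _.
  have [Tok | nTok] := boolP (level_set_ok k M m T); last first.
    by rewrite big1 // => d _; rewrite /level_ok /= (negbTE nTok) andbF.
  have cT : #|T| = k m by move: Tok; case: m m0 {mM km xm m'M} => //= m _ /andP [_ /eqP].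
  rewrite mul1n -(size_sorted_pairs k M) in cT *; set s := sorted_pairs k M T in cT *.
  rewrite (eq_bigr (fun d : 'I_B => (d < k m) && hit (nth (0, 0) s d) : nat)).
    rewrite -card_predE (card_ord_lt_count (fun i => hit (nth (0, 0) s i)) (Bnd_ge mM)).
    by rewrite -count_map -[in RHS](mkseq_nth (0, 0) s) cT.
  by move=> d _; rewrite /level_ok /= Tok andbT.
transitivity (\sum_q hit (pair_val k M q) * #|[pred T | level_set_ok k M m T && (q \in T)]|).
  under eq_bigr do rewrite count_sorted_pairs big_distrr big_mkcond /=.
  rewrite exchange_big; apply: eq_bigr => q _; rewrite card_predE big_distrr /=.
  by apply: eq_bigr => T _; case: (q \in T); case: (level_set_ok _ _ _ _); case: (hit _).
set C := 'C(_, _); rewrite -(card_pair_box_coord right m'M xm) cardsE card_predE big_distrr /=.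
apply: eq_bigr => q _; rewrite card_level_set_ok_mem // -/C.
by rewrite /hit; case: (_ == x); case: (_ \in _); rewrite ?mul0n ?mul1n ?muln0 ?muln1.
Qed.

End LevelCounts.

(** * Stationarity of the blocks *)

Section Stationarity.
Variables (k : nat -> nat) (M : nat).
Local Notation B := (Bnd k M).
Local Notation Om := (Omega k M).
Local Notation level := ({set 'I_B * 'I_B} * 'I_B)%type.

Definition depends_below {A : Type} (m : nat) (H : Om -> A -> bool) : Prop :=
  forall w w', (forall l, l < m -> Sof k M w l = Sof k M w' l) -> H w =1 H w'.

Lemma card_valid_sum (P : pred Om) :
  #|[pred w | Valid k M w && P w]| = \sum_(w | Valid k M w) P w.
Proof. by rewrite card_predE [RHS]big_mkcond; apply: eq_bigr => w _; case: (Valid _ _ _). Qed.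

Lemma card_valid_resample_level m (G : Om -> level -> bool) :
  m <= M -> depends_below m G ->
  #|[pred w | Valid k M w && G w (get_level k M (inord m) w)]|
    * #|[pred z : level | level_ok k M m z]| =
  \sum_(w | Valid k M w) #|[pred z : level | level_ok k M m z && G w z]|.
Proof.
move=> mM Gdep; pose i : 'I_M.+1 := inord m; have im : i = m :> nat by rewrite inordK.
have valid_upd w z : Valid k M (set_level k M i w z) && level_ok k M m (get_level k M i w) =
    Valid k M w && level_ok k M m z by rewrite -im valid_set_level.
rewrite card_valid_sum (sum_resample (get_set_level k M i) (set_levelK k M i) valid_upd).
apply: eq_bigr => w _; rewrite card_predE big_mkcond /=; apply: eq_bigr => z _.
have [zok | //] := boolP (level_ok k M m z).
by rewrite get_set_level (Gdep _ w) // => l lm; rewrite Sof_set_level ltn_eqF ?im.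
Qed.

Lemma card_valid_resample_choice m (H : Om -> nat -> bool) :
  m <= M -> depends_below m.+1 H ->
  #|[pred w | Valid k M w && H w (Cof k M w m)]| * k m =
  \sum_(w | Valid k M w) count (H w) (iota 0 (k m)).
Proof.
move=> mM Hdep; pose i : 'I_M.+1 := inord m; have im : i = m :> nat by rewrite inordK.
have valid_upd w (d : 'I_B) : Valid k M (set_choice k M i w d) && (w.2 i < k m) =
    Valid k M w && (d < k m) by rewrite -im valid_set_choice.
rewrite card_valid_sum -[in LHS](card_ord_lt (Bnd_ge k M mM)).
rewrite (@sum_resample _ _ _ [pred d : 'I_B | d < k m] _ _
  (get_set_choice k M i) (set_choiceK k M i) valid_upd).
apply: eq_bigr => w _; rewrite -(card_ord_lt_count _ (Bnd_ge k M mM)) card_predE big_mkcond /=.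
apply: eq_bigr => d _; rewrite Cof_set_choice im eqxx (Hdep _ w) => [|l _].
  by case: (d < k m).
by rewrite Sof_set_choice.
Qed.

Hypothesis k_gt0 : forall l, 0 < k l.
Hypothesis k_sq : forall l, 0 < l -> k l.-1 <= k l <= k l.-1 ^ 2.

(* Given the levels below m, every value in [0, k_{m-1}) is the chosen coordinate of the same
   number of level-m configurations, so that coordinate can be traded for C_{m-1}. *)
Lemma card_valid_descend_step m right (H : Om -> nat -> bool) :
  0 < m -> m <= M -> depends_below m H ->
  #|[pred w | Valid k M w && H w (pair_coord right (nth (0, 0) (Sof k M w m) (Cof k M w m)))]| =
  #|[pred w | Valid k M w && H w (Cof k M w m.-1)]|.
Proof.
move=> m0 mM Hdep; have m'M : m.-1 <= M by rewrite (leq_trans (leq_pred m)).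
set c := 'C(k m.-1 * k m.-1 - 1, k m - 1) * k m.-1.
have fibers (h : pred nat) :
    #|[pred z : level | level_ok k M m z && h (picked_coord k M right z)]| =
    c * count h (iota 0 (k m.-1)).
  apply: card_fibers_uniform => [z | x]; first exact: picked_coord_lt.
  exact: card_level_ok_picked.
have card_ok : #|[pred z : level | level_ok k M m z]| = c * k m.-1.
  by rewrite -[k m.-1](size_iota 0) -count_predT -fibers; apply: eq_card => z; rewrite !inE andbT.
have c0 : 0 < c * k m.-1.
  rewrite !muln_gt0 k_gt0 bin_gt0 leq_sub2r //.
  by case/andP: (k_sq _ m0) => _; rewrite mulnn.
have Gdep : depends_below m (fun w z => H w (picked_coord k M right z)).
  by move=> w w' /Hdep same z /=.
apply/eqP; rewrite -(eqn_pmul2r c0) -{1}card_ok.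
rewrite (eq_card (_ : _ =i [pred w | Valid k M w &&
    H w (picked_coord k M right (get_level k M (inord m) w))])); last first.
  by move=> w; rewrite !inE Sof_E ?Cof_E.
rewrite (card_valid_resample_level _ _ mM Gdep); under eq_bigr do rewrite fibers.
rewrite -big_distrr /= -(card_valid_resample_choice _ _ m'M); last by rewrite prednK.
by rewrite mulnCA.
Qed.

Lemma card_valid_descend n a q (G : Om -> nat -> bool) : n + a <= M -> depends_below n.+1 G ->
  #|[pred w | Valid k M w && G w (descend (Sof k M w) n a (Cof k M w (n + a)) q)]| =
  #|[pred w | Valid k M w && G w (Cof k M w n)]|.
Proof.
elim: a q => [|a IH] q naM Gdep; first by apply: eq_card => w; rewrite addn0.
pose q' := if q < 2 ^ a then q else q - 2 ^ a.
pose H w x := G w (descend (Sof k M w) n a x q').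
have Hdep : depends_below (n + a).+1 H.
  move=> w w' same x; rewrite /H (Gdep w w') => [|l ln].
    by congr G; apply: descend_ext => l ln; apply: same; rewrite ltnS.
  by apply: same; apply: leq_trans ln _; rewrite ltnS leq_addr.
have naM' : n + a <= M by rewrite (leq_trans _ naM) // leq_add2l.
rewrite addnS in naM *.
have step := card_valid_descend_step (n + a).+1 (2 ^ a <= q) H (ltn0Sn _) naM Hdep.
rewrite -(IH q' naM' Gdep); apply: etrans (etrans step _); apply: eq_card => w; rewrite !inE /H //=.
by rewrite /q' ltnNge; case: (2 ^ a <= q).
Qed.

Lemma card_valid_Xblock n j (g : pred (seq nat)) : 0 < j -> j.+1 * 2 ^ n <= 2 ^ M.+1 ->
  #|[pred w | Valid k M w && g (Xblock k M w n j)]| =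
  #|[pred w | Valid k M w && g (Xblock k M w n 1)]|.
Proof.
move=> j0 jM; have [a [q [naM qa ->]]] := dyadic_decomp j0 jM.
have nM : n + 0 <= M by rewrite addn0 (leq_trans (leq_addr a n)).
have Gdep : depends_below n.+1 (fun w x => g (Yf (Sof k M w) n x)).
  by move=> w w' same x; congr g; apply: Yf_ext => l ln; apply: same.
transitivity #|[pred w | Valid k M w && g (Yf (Sof k M w) n (Cof k M w n))]|.
  rewrite -(card_valid_descend _ _ q _ naM Gdep); apply: eq_card => w.
  by rewrite !inE Xblock_descend.
by apply: eq_card => w; rewrite !inE -[1]/(2 ^ 0 + 0) Xblock_descend // addn0.
Qed.

End Stationarity.

(** * Distinct blocks force pairs into the random subset *)

Definition block_children (k : nat -> nat) (S : nat -> seq (nat * nat)) (l m : nat) (s : seq nat)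
  : seq (nat * nat) :=
  [seq (Yf_index k S l (take (2 ^ l) b), Yf_index k S l (drop (2 ^ l) b))
     | b <- [seq block l.+1 s t | t <- iota 0 m]].

Lemma block_children_ext k S S' l m s : (forall l', l' <= l -> S l' = S' l') ->
  block_children k S l m s = block_children k S' l m s.
Proof.
move=> same; apply: eq_map => b; congr (_, _); rewrite /Yf_index /mkseq;
  by congr index; apply: eq_map => i; apply: Yf_ext.
Qed.

Section Children.
Variables (k : nat -> nat) (M : nat).
Local Notation Om := (Omega k M).

Lemma block_childrenE (w : Om) l n c : Valid k M w -> l < n -> n <= M -> c < k n ->
  let S := Sof k M w in
  let children := [seq nth (0, 0) (S l.+1) (descend S l.+1 (n - l.+1) c t)
                     | t <- iota 0 (2 ^ (n - l.+1))] in
  [/\ block_children k S l (2 ^ (n - l.+1)) (Yf S n c) = children,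
      [seq block l.+1 (Yf S n c) t | t <- iota 0 (2 ^ (n - l.+1))] =
        [seq Yf S l p.1 ++ Yf S l p.2 | p <- children] &
      {subset children <= S l.+1}].
Proof.
move=> vw ln nM cn S children; have nlM : l.+1 <= M := leq_trans ln nM.
have nln : l.+1 + (n - l.+1) = n by rewrite subnKC.
have e_lt t : descend S l.+1 (n - l.+1) c t < k l.+1 by apply: descend_lt; rewrite ?nln.
have blocksE : [seq block l.+1 (Yf S n c) t | t <- iota 0 (2 ^ (n - l.+1))] =
    [seq Yf S l p.1 ++ Yf S l p.2 | p <- children].
  rewrite -map_comp; apply/eq_in_map => t; rewrite mem_iota => /andP [_ tm].
  by rewrite -{1}nln block_Yf.
split=> //; last first.
  move=> p /mapP [t _ ->]; have [_ sz _] := Sof_valid _ _ _ vw _ (ltn0Sn l) nlM.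
  by rewrite mem_nth // sz.
rewrite /block_children blocksE -map_comp -[RHS]map_id; apply/eq_in_map => _ /mapP [t _ ->] /=.
have /andP [xl yl] := nth_Sof_lt _ _ _ vw l.+1 _ (ltn0Sn l) nlM (e_lt t).
rewrite take_size_cat ?size_Yf // drop_size_cat ?size_Yf //.
by rewrite !Yf_indexK ?(ltnW nlM) //; case: (nth _ _ _).
Qed.

Lemma block_children_uniq_sub (w : Om) l n c : Valid k M w -> l < n -> n <= M -> c < k n ->
  distinct_blocks l.+1 (2 ^ (n - l.+1)) (Yf (Sof k M w) n c) ->
  uniq (block_children k (Sof k M w) l (2 ^ (n - l.+1)) (Yf (Sof k M w) n c)) &&
  all (mem (Sof k M w l.+1)) (block_children k (Sof k M w) l (2 ^ (n - l.+1)) (Yf (Sof k M w) n c)).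
Proof.
move=> vw ln nM cn; have [-> blocksE sub] := block_childrenE _ _ _ _ vw ln nM cn.
rewrite /distinct_blocks blocksE => /map_uniq -> /=.
by apply/allP => p /sub.
Qed.

Lemma card_level_set_ok_supseq l (r : seq (nat * nat)) : l < M -> uniq r -> size r <= k l.+1 ->
  #|[pred T | level_set_ok k M l.+1 T && all (mem (sorted_pairs k M T)) r]| <=
  'C(k l * k l - size r, k l.+1 - size r).
Proof.
move=> lM ru rk.
case: (pickP [pred T | level_set_ok k M l.+1 T && all (mem (sorted_pairs k M T)) r]);
  last by move=> none; rewrite (eq_card0 none).
move=> T0 /andP [_ /allP rT0].
pose P := [set q | pair_val k M q \in r].
have cardP : #|P| = size r.
  apply: card_preim_seq => // [|p /rT0 pT0]; first exact: pair_val_inj.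
  have /exists_inP [q _ /eqP <-] : [exists q in T0, pair_val k M q == p].
    by rewrite -mem_sorted_pairs.
  exact: codom_f.
rewrite -cardP -(card_pair_box k M _ (ltnW lM)).
apply: leq_trans (card_draws_supset_le (pair_box k M l) P (k l.+1) _); last by rewrite cardP.
rewrite -cardsE; apply/subset_leq_card/subsetP => T; rewrite !inE => /andP [/andP [-> ->] /allP rT].
by apply/subsetP => q; rewrite inE => /rT qT; rewrite -mem_sorted_pairs_val; exact: qT.
Qed.

(* With the levels up to l fixed, r w is fixed, and a uniform k_{l+1}-subset of the k_l^2
   pairs contains m given pairs for C(k_l^2 - m, k_{l+1} - m) of its C(k_l^2, k_{l+1}) values. *)
Lemma card_valid_children_le l m (r : Om -> seq (nat * nat)) :
  0 < k l.+1 -> l < M -> m <= k l.+1 -> (forall w, size (r w) = m) ->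
  (forall w w', (forall l', l' < l.+1 -> Sof k M w l' = Sof k M w' l') -> r w = r w') ->
  #|[pred w | Valid k M w && (uniq (r w) && all (mem (Sof k M w l.+1)) (r w))]|
    * 'C(k l * k l, k l.+1) <=
  #|[pred w | Valid k M w]| * 'C(k l * k l - m, k l.+1 - m).
Proof.
move=> kl0 lM mk size_r rdep.
pose G w (z : {set 'I_(Bnd k M) * 'I_(Bnd k M)} * 'I_(Bnd k M)) :=
  uniq (r w) && all (mem (sorted_pairs k M z.1)) (r w).
have Gdep : depends_below k M l.+1 G by move=> w w' /rdep eq_r z; rewrite /G eq_r.
rewrite -(leq_pmul2r kl0) -!mulnA -(card_level_ok k M l.+1) //.
rewrite (eq_card (_ : _ =i [pred w | Valid k M w && G w (get_level k M (inord l.+1) w)]));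
  last first.
  by move=> w; rewrite !inE /G Sof_E.
rewrite (card_valid_resample_level _ _ _ _ lM Gdep) card_predE big_mkcond big_distrl /=.
apply: leq_sum => w _; case: (Valid k M w); rewrite ?mul1n //.
rewrite (card_level_ok_set _ _ _ (fun T => uniq (r w) && all (mem (sorted_pairs k M T)) (r w))) //.
rewrite leq_mul2r; apply/orP; right; rewrite /G.
have [ru | _] := boolP (uniq (r w)); last by rewrite (@eq_card0 _ _ (fun T => andbF _)).
by rewrite -(size_r w) card_level_set_ok_supseq // size_r.
Qed.

End Children.

Lemma card_Xblock_eq_le k M n j l s :
  0 < k l.+1 -> 0 < j -> j.+1 * 2 ^ n <= 2 ^ M.+1 -> l < n ->
  2 ^ (n - l.+1) <= k l.+1 -> distinct_blocks l.+1 (2 ^ (n - l.+1)) s ->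
  #|[pred w | Valid k M w && (Xblock k M w n j == s)]| * 'C(k l * k l, k l.+1) <=
  #|[pred w | Valid k M w]| * 'C(k l * k l - 2 ^ (n - l.+1), k l.+1 - 2 ^ (n - l.+1)).
Proof.
move=> kl0 j0 jM ln mk ds; have [a [q [naM qa ej]]] := dyadic_decomp j0 jM.
have nM : n <= M := leq_trans (leq_addr a n) naM.
pose r w := block_children k (Sof k M w) l (2 ^ (n - l.+1)) s.
apply: leq_trans (card_valid_children_le _ _ _ _ r kl0 (leq_trans ln nM) mk _ _).
- rewrite leq_mul2r; apply/orP; right; apply/subset_leq_card/subsetP => w.
  rewrite !inE => /andP [vw /eqP Xs]; rewrite vw /=.
  move: ds; rewrite /r -Xs ej Xblock_descend //.
  by apply: block_children_uniq_sub; rewrite // descend_lt // Cof_lt.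
- by move=> w; rewrite size_map size_map size_iota.
- by move=> w w' same; apply: block_children_ext => l' l'l; apply: same.
Qed.

(** * Entropy *)

Local Open Scope R_scope.

Lemma ln_le x y : 0 < x -> x <= y -> ln x <= ln y.
Proof.
move=> x0 /Rle_lt_or_eq_dec [xy | ->]; last exact: Rle_refl.
exact/Rlt_le/ln_increasing.
Qed.

Lemma INR_sum (T : Type) (r : seq T) (F : T -> nat) :
  INR (\sum_(x <- r) F x) = \big[Rplus/0]_(x <- r) INR (F x).
Proof. by elim: r => [|a r IH]; rewrite ?big_nil // !big_cons plus_INR IH. Qed.

Lemma Rsum_le (T : eqType) (r : seq T) (F G : T -> R) :
  (forall x, x \in r -> F x <= G x) ->
  \big[Rplus/0]_(x <- r) F x <= \big[Rplus/0]_(x <- r) G x.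
Proof.
elim: r => [|a r IH] FG; rewrite ?big_nil ?big_cons; first exact: Rle_refl.
apply: Rplus_le_compat; first by apply: FG; rewrite mem_head.
by apply: IH => x rx; apply: FG; rewrite in_cons rx orbT.
Qed.

Lemma Rsum_mull (T : Type) (r : seq T) (F : T -> R) c :
  c * \big[Rplus/0]_(x <- r) F x = \big[Rplus/0]_(x <- r) (c * F x).
Proof. by elim: r => [|a r IH]; rewrite ?big_nil ?big_cons -?IH; ring. Qed.

Lemma Rsum_divr (T : Type) (r : seq T) (F : T -> R) c :
  \big[Rplus/0]_(x <- r) F x / c = \big[Rplus/0]_(x <- r) (F x / c).
Proof. by rewrite /Rdiv Rmult_comm Rsum_mull; apply: eq_bigr => x _; ring. Qed.

Lemma maxR_le (T : eqType) (F : T -> R) (s : seq T) c :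
  0 <= c -> (forall x, x \in s -> F x <= c) -> maxR [seq F x | x <- s] <= c.
Proof.
case: s => [|x s] //= c0 Fc.
elim: s Fc => [|y s IH] Fc /=; first by apply: Fc; rewrite mem_head.
apply: Rmax_lub; first by apply: Fc; rewrite !inE eqxx orbT.
by apply: IH => z; rewrite inE => /orP [/eqP -> | zs]; apply: Fc; rewrite !inE ?eqxx ?zs ?orbT.
Qed.

Section Entropy.
Variables (k : nat -> nat) (M : nat).
Local Notation Om := (Omega k M).
Local Notation values f := (undup [seq f w | w <- enum [pred w : Om | Valid k M w]]).

Lemma card_valid_partition (f : Om -> seq nat) (g : pred (seq nat)) :
  #|[pred w | Valid k M w && g (f w)]| =
  \sum_(s <- values f) g s * #|[pred w | Valid k M w && (f w == s)]|.
Proof.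
rewrite card_predE (eq_bigr (fun s => \sum_w (g s * (Valid k M w && (f w == s)) : nat))).
  rewrite exchange_big; apply: eq_bigr => w _.
  have [vw | _] := boolP (Valid k M w); last by rewrite big1 // => s _; rewrite muln0.
  rewrite (bigD1_seq (f w)) ?undup_uniq //= ?eqxx ?muln1 ?big1 ?addn0 //.
    by move=> s; rewrite eq_sym => /negbTE ->; rewrite muln0.
  by rewrite mem_undup map_f // mem_enum.
by move=> s _; rewrite card_predE big_distrr.
Qed.

Lemma prob_bounds (E : pred Om) w : Valid k M w -> E w -> 0 < prob k M E <= 1.
Proof.
move=> vw Ew; rewrite /prob.
have EN : (#|[pred x | Valid k M x && E x]| <= #|[pred x | Valid k M x]|)%N.
  by apply: subset_leq_card; apply/subsetP => x; rewrite !inE => /andP [].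
have E0 : (0 < #|[pred x | Valid k M x && E x]|)%N.
  by apply/card_gt0P; exists w; rewrite inE vw Ew.
have /lt_0_INR E0R : (0 < #|[pred x | Valid k M x && E x]|)%coq_nat by apply/ltP.
have N0R : 0 < INR #|[pred x | Valid k M x]| by apply/lt_0_INR/ltP/(leq_trans E0 EN).
split; first exact: Rdiv_lt_0_compat.
apply: (Rmult_le_reg_r _ _ _ N0R); rewrite Rmult_1_l /Rdiv Rmult_assoc Rinv_l ?Rmult_1_r.
  exact/le_INR/leP.
exact: Rgt_not_eq.
Qed.

Lemma entropy_lb (f : Om -> seq nat) (g : pred (seq nat)) beta :
  (forall w, Valid k M w -> g (f w) -> ln (prob k M (fun w' => f w' == f w)) <= - beta) ->
  beta * prob k M (fun w => g (f w)) <= entropy k M f.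
Proof.
move=> lnb; rewrite /prob card_valid_partition INR_sum Rsum_divr Rsum_mull.
apply: Rsum_le => s; rewrite mem_undup => /mapP [w]; rewrite mem_enum => vw ->.
have [p0 p1] := prob_bounds (fun w' => f w' == f w) w vw (eqxx _).
have [gw | ngw] := boolP (g (f w)); rewrite /= ?mul1n ?mul0n.
  have := Rmult_le_compat_l _ _ _ (Rlt_le _ _ p0) (lnb w vw gw); rewrite /prob; lra.
have := Rmult_le_compat_l _ _ _ (Rlt_le _ _ p0) (ln_le _ _ p0 p1); rewrite ln_1 /prob /=; lra.
Qed.

Lemma entropy_ge0 (f : Om -> seq nat) : 0 <= entropy k M f.
Proof.
by rewrite -(Rmult_0_l (prob k M (fun w => pred0 (f w)))); apply: entropy_lb.
Qed.
End Entropy.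

Lemma ln_ratio_le (a N C C' : nat) : (0 < a)%N -> (0 < C)%N -> (a * C <= N * C')%N ->
  ln (INR a / INR N) <= - (ln (INR C) - ln (INR C')).
Proof.
move=> a0 C0 le_aC; have N0 : (0 < N * C')%N by apply: leq_trans le_aC; rewrite muln_gt0 a0.
have [aR CR] : 0 < INR a /\ 0 < INR C by split; apply/lt_0_INR/ltP.
have [NR C'R] : 0 < INR N /\ 0 < INR C'.
  by rewrite muln_gt0 in N0; case/andP: N0; split; apply/lt_0_INR/ltP.
have le_R : INR a / INR N * INR C <= INR C'.
  apply: (Rmult_le_reg_r _ _ _ NR).
  have -> : INR a / INR N * INR C * INR N = INR (a * C) by rewrite mult_INR; field; lra.
  by rewrite -mult_INR multE; apply/le_INR/leP; rewrite [(C' * _)%N]mulnC.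
have := ln_le _ _ (Rmult_lt_0_compat _ _ (Rdiv_lt_0_compat _ _ aR NR) CR) le_R.
rewrite ln_mult //; [lra | exact: Rdiv_lt_0_compat].
Qed.

Lemma binterm_prob_le_entropy k M n j l :
  (forall l, (0 < k l)%N) -> (forall l, (0 < l)%N -> (k l.-1 <= k l <= k l.-1 ^ 2)%N) ->
  (0 < j)%N -> (j.+1 * 2 ^ n <= 2 ^ M.+1)%N -> (0 < l <= n)%N -> (2 ^ (n - l) <= k l)%N ->
  binterm k n l * prob k M (Aevent k M n l) <= entropy k M (fun w => Xblock k M w n j).
Proof.
move=> k_gt0 k_sq j0 jM; case: l => // l /= ln mk.
have -> : prob k M (Aevent k M n l.+1) =
    prob k M (fun w => distinct_blocks l.+1 (2 ^ (n - l.+1)) (Xblock k M w n j)).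
  rewrite /prob (card_valid_Xblock _ _ k_gt0 k_sq _ _ _ j0 jM); congr (INR _ / _).
  by apply: eq_card => w; rewrite !inE Aevent_distinct_blocks.
apply: entropy_lb => w vw ds; rewrite /binterm /= -mulnn.
apply: ln_ratio_le; first by apply/card_gt0P; exists w; rewrite inE vw eqxx.
  by rewrite bin_gt0; case/andP: (k_sq l.+1 isT); rewrite mulnn.
exact: card_Xblock_eq_le (k_gt0 l.+1) _ _ _ _ _.
Qed.

Local Close Scope R_scope.

Theorem proposition11 (k : nat -> nat)
  (hk0 : forall l, 0 < k l)
  (hk : forall l, 0 < l -> k l.-1 <= k l <= k l.-1 ^ 2)
  (n j M : nat) (hn : 0 < n) (hj : 0 < j)
  (hM : j.+1 * 2 ^ n <= 2 ^ M.+1) :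
  Rle (maxR [seq Rmult (binterm k n l) (prob k M (Aevent k M n l))
              | l <- iota 1 n & 2 ^ (n - l) <= k l])
      (entropy k M (fun w => Xblock k M w n j)).
Proof.
apply: maxR_le => [|l]; first exact: entropy_ge0.
rewrite mem_filter mem_iota add1n ltnS => /andP [mk ln].
exact: binterm_prob_le_entropy.
Qed.
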